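(* Let $\varphi:\mathfrak{h}\to V^*$ be a complex factorization structure and $i,j\in\{1,\ldots,m\}$. The factorization curves $\psi_i$ and $\psi_j$ have the same image if and only if there exists an invertible projective transformation $\Phi_{ji}:\mathbb{P}(V_i)\to\mathbb{P}(V_j)$ such that $\psi_i(\ell)=\psi_j(\Phi_{ji}(\ell))$ for all $\ell\in\mathbb{P}(V_i)$.
   Context: $V_1,\ldots,V_m$ are 2-dimensional complex vector spaces, $V^*=V_1^*\otimes\cdots\otimes V_m^*$, $\Sigma^0_{j,\ell}=V_1^*\otimes\cdots\otimes\ell^0\otimes\cdots\otimes V_m^*$ ($\ell^0$ the annihilator of $\ell$, in slot $j$). A factorization structure of dimension $m$ is an injective linear map $\varphi:\mathfrak{h}\to V^*$, $\dim\mathfrak{h}=m+1$, with $\dim(\varphi(\mathfrak{h})\cap\Sigma^0_{j,\ell})=1$ for all $j$ and all $\ell$ in a nonempty Zariski-open subset of $\mathbb{P}(V_j)$. The $j$-th factorization curve $\psi_j:\mathbb{P}(V_j)\to\mathbb{P}(\mathfrak{h})$ is the unique regular extension to $\mathbb{P}(V_j)$ of the generically defined regular map $\ell\mapsto\varphi^{-1}(\varphi(\mathfrak{h})\cap\Sigma^0_{j,\ell})$. *)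

From mathcomp Require Import all_boot all_algebra.
From mathcomp Require Import complex.
From mathcomp Require Import Rstruct.
From Stdlib Require Import Reals.
Set Implicit Arguments.
Unset Strict Implicit.
Unset Printing Implicit Defensive.
Import GRing.Theory.
Local Open Scope ring_scope.

Definition CC : closedFieldType := complex R.

(* Coordinates: V_j = CC^2 (row vectors 'rV_2), V_j^* = CC^2 with the dual
   basis; V^* = V_1^* (x) ... (x) V_m^* is the space of tensors, i.e. of
   arrays indexed by multi-indices s : 'I_m -> 'I_2 (coordinates in the
   tensor product of the dual bases). *)
Definition multi_index (m : nat) := {ffun 'I_m -> 'I_2}.
Definition tensor (m : nat) := {ffun multi_index m -> CC}.

Definition tens_eval (m : nat) (T : tensor m) (v : 'I_m -> 'rV[CC]_2) : CC :=
  \sum_(s : multi_index m) T s * \prod_(k < m) v k 0 (s k).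

(* Sigma^0_{j,l} = V_1^* (x) ... (x) l^0 (x) ... (x) V_m^*, for the line
   l = span(u) in V_j: it consists of the multilinear forms that vanish
   whenever the j-th argument lies in l (l^0 = forms vanishing on l). *)
Definition inSigma0 (m : nat) (j : 'I_m) (u : 'rV[CC]_2) (T : tensor m) : Prop :=
  forall v : 'I_m -> 'rV[CC]_2, (exists c : CC, v j = c *: u) -> tens_eval T v = 0.

(* h = CC^(m+1) (row vectors); phi : h -> V^* linear, given by the images
   of the standard basis vectors. *)
Definition phi_map (m : nat) (B : 'I_m.+1 -> tensor m) (x : 'rV[CC]_m.+1) : tensor m :=
  \sum_(k < m.+1) x 0 k *: B k.

Definition same_point (n : nat) (x y : 'rV[CC]_n) : Prop :=
  x != 0 /\ exists c : CC, c != 0 /\ y = c *: x.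

(* Homogeneous polynomial of degree d in the two coordinates of V_j, given
   by its coefficients; every homogeneous form of degree d is of this form. *)
Definition hform (d : nat) (c : 'I_d.+1 -> CC) (u : 'rV[CC]_2) : CC :=
  \sum_(k < d.+1) c k * u 0 0 ^+ k * u 0 1 ^+ (d - k).

Definition hvec (n d : nat) (f : 'I_n -> 'I_d.+1 -> CC) (u : 'rV[CC]_2) : 'rV[CC]_n :=
  \row_(k < n) hform (f k) u.

(* P holds on a nonempty Zariski-open subset of P^1 = P(CC^2).  Basic open
   sets D(g) (g a homogeneous form) form a basis of the Zariski topology, so
   this is: P holds on some nonempty D(g). *)
Definition generic_P1 (P : 'rV[CC]_2 -> Prop) : Prop :=
  exists (e : nat) (g : 'I_e.+1 -> CC),
    (exists u : 'rV[CC]_2, u != 0 /\ hform g u != 0) /\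
    forall u : 'rV[CC]_2, u != 0 -> hform g u != 0 -> P u.

(* A regular map P^1 -> P^(n-1), represented on nonzero representatives:
   locally (on an open neighbourhood D(g) of each point p) it is given by
   homogeneous polynomials of a common degree without common zero there. *)
Definition regular_P1 (n : nat) (psi : 'rV[CC]_2 -> 'rV[CC]_n) : Prop :=
  forall p : 'rV[CC]_2, p != 0 ->
    exists (d : nat) (f : 'I_n -> 'I_d.+1 -> CC) (e : nat) (g : 'I_e.+1 -> CC),
      hform g p != 0 /\
      forall u : 'rV[CC]_2, u != 0 -> hform g u != 0 ->
        hvec f u != 0 /\ same_point (hvec f u) (psi u).

Definition factorization_structure (m : nat) (B : 'I_m.+1 -> tensor m) : Prop :=
  (forall x : 'rV[CC]_m.+1, phi_map B x = 0 -> x = 0) /\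
  forall j : 'I_m, generic_P1 (fun u =>
    (* dim (phi(h) /\ Sigma^0_{j,[u]}) = 1 *)
    exists T0 : tensor m, T0 != 0 /\
      forall T : tensor m,
        ((exists x, T = phi_map B x) /\ inSigma0 j u T) <-> exists c : CC, T = c *: T0).

(* psi is the j-th factorization curve: the regular map P(V_j) -> P(h)
   extending l |-> phi^{-1}(phi(h) /\ Sigma^0_{j,l}) from a nonempty
   Zariski-open set (such an extension is unique). *)
Definition factorization_curve (m : nat) (B : 'I_m.+1 -> tensor m) (j : 'I_m)
    (psi : 'rV[CC]_2 -> 'rV[CC]_m.+1) : Prop :=
  regular_P1 psi /\
  generic_P1 (fun u =>
    forall x : 'rV[CC]_m.+1, inSigma0 j u (phi_map B x) <-> exists c : CC, x = c *: psi u).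

Definition same_image (n : nat) (psi1 psi2 : 'rV[CC]_2 -> 'rV[CC]_n) : Prop :=
  (forall u, u != 0 -> exists u', u' != 0 /\ same_point (psi1 u) (psi2 u')) /\
  (forall u', u' != 0 -> exists u, u != 0 /\ same_point (psi1 u) (psi2 u')).

From mathcomp Require Import all_boot all_algebra.
From mathcomp Require Import complex Rstruct ring.
From Stdlib Require Import Classical.
Import GRing.Theory Num.Theory.
Set Implicit Arguments. Unset Strict Implicit. Unset Printing Implicit Defensive.
Local Open Scope ring_scope.

(* If the images agree, then for generic l there is l' with psi_i(l) = psi_j(l'), so
   phi(psi_i(l)) lies in Sigma^0_{j,l'}.  Contracting its j-th slot against fixed vectors
   gives a linear equation for l' whose coefficients are polynomials in an affine
   coordinate t of l; after cancelling their gcd, l' = [b(t) : -a(t)] with a, b coprime.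
   Two distinct Sigma^0_{i,l} meet phi(h) only in 0, so psi_i is generically injective,
   hence so is t |-> [b(t) : -a(t)].  This forces deg a, deg b <= 1 with nonzero
   determinant, i.e. l |-> l' is projective linear.  Finally, two regular maps from P^1
   that agree off finitely many points agree everywhere. *)

Lemma ord2_cases (k : 'I_2) : k = 0 \/ k = 1.
Proof. by case: k => -[|[|//]] k_lt2; [left | right]; apply: val_inj. Qed.

Definition vec2 (R : Type) (x y : R) : 'rV[R]_2 := \row_k (if k == 0 then x else y).

Section ClosedFieldPolynomials.

Variable F : numClosedFieldType.
Implicit Types (a b g p q : {poly F}) (s : seq F) (c t : F).

Lemma seq_avoid s : exists c, c \notin s.
Proof.
pose l := [seq (n%:R : F) | n <- iota 0 (size s).+1].
have l_uniq : uniq l by rewrite map_inj_uniq ?iota_uniq // => x y /eqP; rewrite eqr_nat => /eqP.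
have [/allP l_sub | /allPn [c _ cNs]] := boolP (all (mem s) l); last by exists c.
by have := uniq_leq_size l_uniq l_sub; rewrite size_map size_iota ltnn.
Qed.

Lemma roots_finite q : q != 0 -> exists rs : seq F, forall t, root q t -> t \in rs.
Proof.
move=> q_neq0; have [rs ->] := closed_field_poly_normal q.
by exists rs => t; rewrite rootZ ?root_prod_XsubC // lead_coef_eq0.
Qed.

Lemma poly_eq0_off q h s : h != 0 ->
  (forall t, t \notin s -> h.[t] != 0 -> q.[t] = 0) -> q = 0.
Proof.
move=> h_neq0 qh0; apply/eqP; apply: contraT => q_neq0.
have [rs rsP] := roots_finite (mulf_neq0 q_neq0 h_neq0).
have [t] := seq_avoid (s ++ rs); rewrite mem_cat negb_or => /andP[tNs tNrs].
have ht : h.[t] != 0.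
  by apply: contra tNrs => /eqP ht; apply: rsP; rewrite /root hornerM ht mulr0.
by move: tNrs; rewrite rsP // /root hornerM qh0 ?mul0r.
Qed.

Lemma deriv_eq0_polyC p : p^`() = 0 -> p = (p`_0)%:P.
Proof.
move=> dp0; apply/polyP => -[|i]; rewrite coefC //=.
have /eqP : (p^`())`_i = 0 by rewrite dp0 coef0.
by rewrite coef_deriv mulrn_eq0 /= => /eqP.
Qed.

Lemma root_size_gt2 g : (2 < size g)%N ->
  exists t1 t2, [/\ root g t1, root g t2 & t1 != t2 \/ root g^`() t1].
Proof.
move=> g_gt2.
have /closed_rootP [t1 gt1] : size g != 1 by rewrite neq_ltn (ltnW g_gt2) orbT.
have /factor_theorem [h def_g] := gt1.
have h_gt1 : (1 < size h)%N.
  have h_neq0 : h != 0 by apply: contraTneq g_gt2 => h0; rewrite def_g h0 mul0r size_poly0.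
  by move: g_gt2; rewrite def_g size_mul ?polyXsubC_eq0 // size_XsubC addn2.
have /closed_rootP [t2 ht2] : size h != 1 by rewrite neq_ltn h_gt1 orbT.
exists t1, t2; split => //; first by rewrite def_g rootM ht2.
have [t12|] := eqVneq t1 t2; [right | by left].
have /factor_theorem [h2 def_h] := ht2.
by rewrite def_g def_h -t12 /root !derivM !hornerE subrr; apply/eqP; ring.
Qed.

Definition wronskian a b := a^`() * b - a * b^`().

Lemma coprimep_wronskian_eq0 a b : coprimep a b -> wronskian a b = 0 ->
  a^`() = 0 /\ b^`() = 0.
Proof.
move=> cop_ab /eqP; rewrite subr_eq0 => /eqP eq_ab.
have small_deriv p : p %| p^`() -> p^`() = 0.
  move=> dvd; apply/eqP; apply: contraT => dp_neq0.
  have p_neq0 : p != 0 by apply: contra dp_neq0 => /eqP->; rewrite deriv0.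
  by move: (dvdp_leq dp_neq0 dvd); rewrite leqNgt lt_size_deriv.
split; apply: small_deriv.
  by rewrite -(Gauss_dvdpl _ cop_ab) eq_ab dvdp_mulr.
by rewrite -(Gauss_dvdpr _ (_ : coprimep b a)) 1?coprimep_sym // -eq_ab dvdp_mull.
Qed.

Lemma root_pencil a b c t : coprimep a b -> root (a + c *: b) t ->
  b.[t] != 0 /\ c = - a.[t] / b.[t].
Proof.
move=> cop_ab; rewrite /root hornerD hornerZ addr_eq0 => /eqP at_eq.
have bt_neq0 : b.[t] != 0.
  apply/eqP => bt0; have /(coprimep_root cop_ab) : root a t.
    by rewrite /root at_eq bt0 mulr0 oppr0.
  by rewrite bt0 eqxx.
by split => //; rewrite at_eq opprK mulfK.
Qed.

Lemma root_pencil_wronskian a b c t :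
  root (a + c *: b) t -> root (a + c *: b)^`() t -> root (wronskian a b) t.
Proof.
rewrite derivD derivZ /root /wronskian !hornerE !addr_eq0 => /eqP-> /eqP->.
by apply/eqP; ring.
Qed.

Lemma size_pencil a b c (n := maxn (size a) (size b)) :
  c != - a`_n.-1 / b`_n.-1 -> size (a + c *: b) = n.
Proof.
move=> c_gen; apply/eqP; rewrite eqn_leq; apply/andP; split.
  rewrite (leq_trans (size_polyD _ _)) // geq_max leq_maxl /=.
  by rewrite (leq_trans (size_scale_leq _ _)) ?leq_maxr.
have [n0|n_gt0] := posnP n; first by rewrite n0.
have ab_n : a`_n.-1 != 0 \/ b`_n.-1 != 0.
  move: n_gt0; rewrite /n; case: (leqP (size a) (size b)) => _ n_gt0; [right|left];
  by rewrite -lead_coefE lead_coef_eq0 -size_poly_gt0.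
rewrite -(prednK n_gt0) ltnNge; apply: contra c_gen => /(nth_default 0).
rewrite coefD coefZ; have [bn0|bn_neq0] := eqVneq b`_n.-1 0.
  by rewrite bn0 mulr0 addr0 => an0; move: ab_n; rewrite an0 bn0 eqxx; case.
by move=> /eqP; rewrite addr_eq0 => /eqP->; rewrite opprK mulfK.
Qed.

End ClosedFieldPolynomials.

Section InjectivePencil.

Variables (F : numClosedFieldType) (a b : {poly F}) (s : seq F).
Hypothesis cop_ab : coprimep a b.
Hypothesis pencil_inj : forall t1 t2, t1 \notin s -> t2 \notin s ->
  a.[t1] * b.[t2] = a.[t2] * b.[t1] -> t1 = t2.

Let two_points : exists t1 t2, [/\ t1 \notin s, t2 \notin s & t1 != t2].
Proof.
have [t1 t1Ns] := seq_avoid s; have [t2] := seq_avoid (t1 :: s).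
by rewrite inE negb_or eq_sym => /andP[t12 t2Ns]; exists t1, t2.
Qed.

Lemma pencil_wronskian_neq0 : wronskian a b != 0.
Proof.
apply/eqP => /(coprimep_wronskian_eq0 cop_ab) [/deriv_eq0_polyC da /deriv_eq0_polyC db].
have [t1 [t2 [t1Ns t2Ns /eqP]]] := two_points; apply; apply: pencil_inj => //.
by rewrite da db !hornerC.
Qed.

(* A generic member [a + c *: b] of the pencil has size [maxn (size a) (size b)]; were
   this above 2, it would have two roots, both mapped to [-c], or a double root, which
   is a root of the Wronskian. *)
Lemma pencil_size_le2 : (size a <= 2)%N /\ (size b <= 2)%N.
Proof.
suff : (maxn (size a) (size b) <= 2)%N by rewrite geq_max => /andP.
rewrite leqNgt; apply/negP => n_gt2.
have [rw rwP] := roots_finite pencil_wronskian_neq0.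
pose n := maxn (size a) (size b).
have [c] := seq_avoid (- a`_n.-1 / b`_n.-1 :: [seq - a.[r] / b.[r] | r <- rw ++ s]).
rewrite inE negb_or => /andP[c_gen c_avoid].
have g_gt2 : (2 < size (a + c *: b)%R)%N by rewrite size_pencil.
have root_g t : root (a + c *: b) t -> t \notin rw ++ s /\ a.[t] = - c * b.[t].
  move=> /(root_pencil cop_ab) [bt_neq0 def_c]; split.
    by apply: contra c_avoid => t_in; rewrite def_c (map_f (fun r => - a.[r] / b.[r]) t_in).
  by rewrite def_c mulNr divfK // opprK.
have [t1 [t2 [g_t1 g_t2 [t12 | dg_t1]]]] := root_size_gt2 g_gt2.
  have [] := root_g _ g_t1; rewrite mem_cat negb_or => /andP[_ t1Ns] a_t1.
  have [] := root_g _ g_t2; rewrite mem_cat negb_or => /andP[_ t2Ns] a_t2.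
  by move/eqP: t12; apply; apply: pencil_inj => //; rewrite a_t1 a_t2; ring.
by have [] := root_g _ g_t1; rewrite mem_cat (rwP _ (root_pencil_wronskian g_t1 dg_t1)).
Qed.

Lemma pencil_det_neq0 : a`_0 * b`_1 - a`_1 * b`_0 != 0.
Proof.
have [size_a size_b] := pencil_size_le2.
have [t1 [t2 [t1Ns t2Ns]]] := two_points; apply: contra => /eqP det0.
apply/eqP/pencil_inj => //; apply/eqP; rewrite -subr_eq0.
rewrite !(horner_coef_wide _ size_a) !(horner_coef_wide _ size_b).
rewrite !big_ord_recr !big_ord0 /= !expr0 !expr1 !add0r.
suff -> : (a`_0 * 1 + a`_1 * t1) * (b`_0 * 1 + b`_1 * t2) -
          (a`_0 * 1 + a`_1 * t2) * (b`_0 * 1 + b`_1 * t1)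
        = (a`_0 * b`_1 - a`_1 * b`_0) * (t2 - t1) by rewrite det0 mul0r.
ring.
Qed.

Definition pencil_mx : 'M[F]_2 := \matrix_(r, c) (if c == 0 then b`_r else - a`_r).

Lemma pencil_mx_unit : pencil_mx \in unitmx.
Proof.
pose adj : 'M[F]_2 := \matrix_(r, c)
  (if r == 0 then (if c == 0 then - a`_1 else a`_0) else (if c == 0 then - b`_1 else b`_0)).
have det_neq0 := pencil_det_neq0.
suff /mulmx1_unit[] : pencil_mx *m ((a`_0 * b`_1 - a`_1 * b`_0)^-1 *: adj) = 1%:M by [].
apply/matrixP => r c; rewrite !mxE !big_ord_recr big_ord0 /= !mxE.
by case: (ord2_cases r) => ->; case: (ord2_cases c) => -> /=; field.
Qed.

Lemma vec2_mul_pencil_mx t : vec2 1 t *m pencil_mx = vec2 b.[t] (- a.[t]).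
Proof.
have [size_a size_b] := pencil_size_le2.
apply/rowP => k; rewrite !mxE !big_ord_recr big_ord0 /= !mxE /=.
rewrite (horner_coef_wide _ size_a) (horner_coef_wide _ size_b) !big_ord_recr !big_ord0 /=.
by case: (ord2_cases k) => -> /=; ring.
Qed.

End InjectivePencil.

Section SamePoint.

Variable n : nat.
Implicit Types x y z : 'rV[CC]_n.

Lemma same_point_neq0r x y : same_point x y -> y != 0.
Proof. by move=> [x_neq0 [c [c_neq0 ->]]]; rewrite scaler_eq0 negb_or c_neq0. Qed.

Lemma same_point_scale x c : x != 0 -> c != 0 -> same_point x (c *: x).
Proof. by move=> x_neq0 c_neq0; split => //; exists c. Qed.

Lemma same_point_sym x y : same_point x y -> same_point y x.
Proof.
move=> xy; have y_neq0 := same_point_neq0r xy; move: xy => [_ [c [c_neq0 def_y]]].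
by split => //; exists c^-1; rewrite invr_eq0 c_neq0 def_y scalerA mulVf // scale1r.
Qed.

Lemma same_point_trans x y z : same_point x y -> same_point y z -> same_point x z.
Proof.
move=> [x_neq0 [c [c_neq0 ->]]] [_ [d [d_neq0 ->]]].
by split => //; exists (d * c); rewrite mulf_neq0 // scalerA.
Qed.

Lemma same_point_minor x y : same_point x y -> forall a b, x 0 a * y 0 b = x 0 b * y 0 a.
Proof. by move=> [_ [c [_ ->]]] a b; rewrite !mxE; ring. Qed.

Lemma minor_same_point x y : x != 0 -> y != 0 ->
  (forall a b, x 0 a * y 0 b = x 0 b * y 0 a) -> same_point x y.
Proof.
move=> x_neq0 y_neq0 minor.
have [a xa_neq0] : exists a, x 0 a != 0.
  apply: NNPP => all0; move/eqP: x_neq0; apply; apply/rowP => k; rewrite mxE.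
  by apply: NNPP => xk; apply: all0; exists k; apply/eqP.
have def_y : y = (y 0 a / x 0 a) *: x.
  by apply/rowP => b; rewrite mxE; apply: (mulfI xa_neq0); rewrite minor; field.
split => //; exists (y 0 a / x 0 a); split => //.
by apply: contra y_neq0 => /eqP c0; rewrite def_y c0 scale0r.
Qed.

End SamePoint.

Definition det2 (u w : 'rV[CC]_2) : CC := u 0 0 * w 0 1 - u 0 1 * w 0 0.

Section ProjectiveLine.

Implicit Types (p u v w : 'rV[CC]_2) (s : seq CC) (t : CC).

Lemma row2P u v : u 0 0 = v 0 0 -> u 0 1 = v 0 1 -> u = v.
Proof. by move=> eq0 eq1; apply/rowP => k; case: (ord2_cases k) => ->. Qed.

Lemma vec2_eta u : u = vec2 (u 0 0) (u 0 1).
Proof. by apply: row2P; rewrite !mxE. Qed.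

Lemma vec2_neq0 (x y : CC) : (vec2 x y != 0) = (x != 0) || (y != 0).
Proof.
apply/idP/idP => [|/orP[] nz].
- apply: contraTT => /norP[/negPn/eqP-> /negPn/eqP->]; rewrite negbK.
  by apply/eqP/rowP => k; rewrite !mxE; case: ifP.
- by apply: contra nz => /eqP/rowP/(_ 0); rewrite !mxE /= => ->.
- by apply: contra nz => /eqP/rowP/(_ 1); rewrite !mxE /= => ->.
Qed.

Lemma row2_decomp u : u = u 0 0 *: vec2 1 0 + u 0 1 *: vec2 0 1.
Proof. by apply: row2P; rewrite !mxE /=; ring. Qed.

Lemma vec2_line t : vec2 1 0 + t *: vec2 0 1 = vec2 1 t.
Proof. by apply: row2P; rewrite !mxE /=; ring. Qed.

Lemma vec2_line1_neq0 t : vec2 1 t != 0 :> 'rV[CC]_2.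
Proof. by rewrite vec2_neq0 oner_eq0. Qed.

Lemma det2_vec2 (x y x' y' : CC) : det2 (vec2 x y) (vec2 x' y') = x * y' - y * x'.
Proof. by rewrite /det2 !mxE. Qed.

Lemma det2_std_basis : det2 (vec2 1 0) (vec2 0 1) = 1.
Proof. by rewrite det2_vec2 mulr1 mulr0 subr0. Qed.

Lemma det2_decomp p w v : det2 p w != 0 ->
  v = (det2 v w / det2 p w) *: p + (det2 p v / det2 p w) *: w.
Proof. by move=> D; apply: row2P; rewrite !mxE; apply: (mulfI D); rewrite /det2 in D *; field. Qed.

Lemma det2_eq0_same_point u w : u != 0 -> w != 0 -> det2 u w = 0 -> same_point u w.
Proof.
move=> u_neq0 w_neq0 /eqP; rewrite subr_eq0 => /eqP D.
apply: minor_same_point => // a b.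
by case: (ord2_cases a) => ->; case: (ord2_cases b) => ->.
Qed.

Lemma exists_det2_neq0 p : p != 0 -> exists w, det2 p w != 0.
Proof.
rewrite [p]vec2_eta vec2_neq0 => /orP[p0|p1].
  by exists (vec2 0 1); rewrite /det2 !mxE /= mulr1 mulr0 subr0.
by exists (vec2 1 0); rewrite /det2 !mxE /= mulr1 mulr0 sub0r oppr_eq0.
Qed.

Lemma det2_free p w a b : det2 p w != 0 -> a *: p + b *: w = 0 -> a = 0 /\ b = 0.
Proof.
move=> D abpw0; have /rowP eq := abpw0; have := eq 0; have := eq 1.
rewrite !mxE => e1 e0; rewrite /det2 in D.
split; apply: (mulIf D); rewrite mul0r.
  by transitivity ((a * p 0 0 + b * w 0 0) * w 0 1 - (a * p 0 1 + b * w 0 1) * w 0 0);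
    [ring | rewrite e0 e1; ring].
by transitivity ((a * p 0 1 + b * w 0 1) * p 0 0 - (a * p 0 0 + b * w 0 0) * p 0 1);
  [ring | rewrite e0 e1; ring].
Qed.

Lemma det2_neq0r p w : det2 p w != 0 -> w != 0.
Proof. by apply: contra => /eqP->; rewrite /det2 !mxE !mulr0 subrr. Qed.

Lemma line_neq0 p w t : det2 p w != 0 -> p + t *: w != 0.
Proof.
move=> D; apply/eqP; rewrite -[p]scale1r => /(det2_free D) [/eqP].
by rewrite oner_eq0.
Qed.

Lemma line_same_point_inj p w t1 t2 : det2 p w != 0 ->
  same_point (p + t1 *: w) (p + t2 *: w) -> t1 = t2.
Proof.
move=> D [_ [c [_ eq_c]]].
have /(det2_free D) [c1 t12] : (1 - c) *: p + (t2 - c * t1) *: w = 0.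
  apply/eqP; rewrite -subr_eq0 subr0; apply/eqP.
  transitivity ((p + t2 *: w) - c *: (p + t1 *: w)); last by rewrite eq_c subrr.
  by apply: row2P; rewrite !mxE; ring.
have c_1 : c = 1 by apply/eqP; rewrite eq_sym -subr_eq0 c1.
by apply/eqP; rewrite eq_sym -subr_eq0 -t12 c_1 mul1r.
Qed.

End ProjectiveLine.

Definition cofinite_P1 (P : 'rV[CC]_2 -> Prop) : Prop :=
  exists zs : seq 'rV[CC]_2,
    forall u, u != 0 -> (forall z, z \in zs -> ~ same_point z u) -> P u.

Section Cofinite.

Implicit Types (P Q : 'rV[CC]_2 -> Prop) (p u w : 'rV[CC]_2) (s : seq CC).

Lemma cofinite_P1_impl P Q : (forall u, u != 0 -> P u -> Q u) ->
  cofinite_P1 P -> cofinite_P1 Q.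
Proof. by move=> PQ [zs zsP]; exists zs => u u_neq0 u_gen; apply/PQ/zsP. Qed.

Lemma cofinite_P1_and P Q :
  cofinite_P1 P -> cofinite_P1 Q -> cofinite_P1 (fun u => P u /\ Q u).
Proof.
move=> [zs1 zs1P] [zs2 zs2P]; exists (zs1 ++ zs2) => u u_neq0 u_gen.
by split; [apply: zs1P | apply: zs2P] => // z z_in; apply: u_gen; rewrite mem_cat z_in ?orbT.
Qed.

Lemma cofinite_P1_all (T : eqType) (zs : seq T) (P : T -> 'rV[CC]_2 -> Prop) :
  (forall z, z \in zs -> cofinite_P1 (P z)) ->
  cofinite_P1 (fun u => forall z, z \in zs -> P z u).
Proof.
elim: zs => [_|z zs IHzs cofP]; first by exists [::].
have cof_zs z' : z' \in zs -> cofinite_P1 (P z').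
  by move=> z'_in; apply: cofP; rewrite inE z'_in orbT.
have [ys ysP] := cofinite_P1_and (cofP z (mem_head z zs)) (IHzs cof_zs).
exists ys => u u_neq0 u_gen z'; rewrite inE.
by have [Pz Pzs] := ysP u u_neq0 u_gen => /orP[/eqP-> | /Pzs].
Qed.

Lemma cofinite_P1_line P p w : cofinite_P1 P -> det2 p w != 0 ->
  exists s, forall t, t \notin s -> P (p + t *: w).
Proof.
move=> [zs zsP] D.
suff [s sP] : exists s, forall t, t \notin s ->
    forall z, z \in zs -> ~ same_point z (p + t *: w).
  by exists s => t t_gen; apply: zsP; [apply: line_neq0 | apply: sP].
elim: zs {zsP} => [|z zs [s sP]]; first by exists [::].
have [[t0 zt0]|no_t] := classic (exists t0, same_point z (p + t0 *: w)).
  exists (t0 :: s) => t; rewrite inE negb_or => /andP[t_neq_t0 t_gen] z'.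
  rewrite inE => /orP[/eqP-> zt | /sP]; last exact.
  move/eqP: t_neq_t0; apply; apply: (line_same_point_inj D).
  exact: same_point_trans (same_point_sym zt) zt0.
exists s => t t_gen z'; rewrite inE => /orP[/eqP-> zt | /sP]; last exact.
by apply: no_t; exists t.
Qed.

Lemma cofinite_P1_of_line P p w s : det2 p w != 0 ->
  (forall u c, u != 0 -> c != 0 -> P u -> P (c *: u)) ->
  (forall t, t \notin s -> P (p + t *: w)) -> cofinite_P1 P.
Proof.
move=> D P_scale P_line; exists (w :: [seq p + t *: w | t <- s]) => u u_neq0 u_gen.
have def_u := det2_decomp u D.
set a := det2 u w / det2 p w in def_u; set b := det2 p u / det2 p w in def_u.
have a_neq0 : a != 0.
  apply/eqP => a0; have b_neq0 : b != 0.
    by apply: contra u_neq0 => /eqP b0; rewrite def_u a0 b0 !scale0r addr0.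
  apply: (u_gen w (mem_head _ _)).
  by rewrite def_u a0 scale0r add0r; apply: same_point_scale => //; apply: det2_neq0r D.
have def_u' : u = a *: (p + (b / a) *: w).
  by rewrite def_u scalerDr scalerA mulrCA mulfV // mulr1.
rewrite def_u'; apply: P_scale => //; first exact: line_neq0.
apply: P_line; apply/negP => ba_in.
apply: (u_gen (p + (b / a) *: w)).
  by rewrite inE (map_f (fun t => p + t *: w) ba_in) orbT.
by rewrite [X in same_point _ X]def_u'; apply: same_point_scale => //; apply: line_neq0.
Qed.

Lemma cofinite_P1_not_same_point P n (f : 'rV[CC]_2 -> 'rV[CC]_n) y :
  cofinite_P1 P ->
  (forall u1 u2, u1 != 0 -> u2 != 0 -> P u1 -> P u2 ->
     same_point (f u1) (f u2) -> same_point u1 u2) ->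
  cofinite_P1 (fun u => ~ same_point (f u) y).
Proof.
move=> [zs zsP] f_inj.
have [[u0 [u0_neq0 Pu0 fu0]] | no_u0] :=
  classic (exists u0, [/\ u0 != 0, P u0 & same_point (f u0) y]).
  exists (u0 :: zs) => u u_neq0 u_gen fu; apply: (u_gen u0 (mem_head _ _)).
  apply: f_inj => //; last exact: same_point_trans fu0 (same_point_sym fu).
  by apply: zsP => // z z_in; apply: u_gen; rewrite inE z_in orbT.
by exists zs => u u_neq0 u_gen fu; apply: no_u0; exists u; split => //; apply: zsP.
Qed.

End Cofinite.

Section HomogeneousForms.

Variable d : nat.
Implicit Types (g : 'I_d.+1 -> CC) (p u w : 'rV[CC]_2).

Lemma hform_scale g c u : hform g (c *: u) = c ^+ d * hform g u.
Proof.
rewrite /hform mulr_sumr; apply: eq_bigr => k _; rewrite !mxE !exprMn.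
have k_le_d : (k <= d)%N by rewrite -ltnS.
by rewrite -[in c ^+ d](subnKC k_le_d) exprD; ring.
Qed.

Lemma hvec_scale n (f : 'I_n -> 'I_d.+1 -> CC) c u : hvec f (c *: u) = c ^+ d *: hvec f u.
Proof. by apply/rowP => k; rewrite !mxE hform_scale. Qed.

Definition hform_line g p w : {poly CC} :=
  \sum_(k < d.+1) (g k)%:P * ((p 0 0)%:P + (w 0 0)%:P * 'X) ^+ k
                             * ((p 0 1)%:P + (w 0 1)%:P * 'X) ^+ (d - k).

Lemma hform_lineE g p w t : (hform_line g p w).[t] = hform g (p + t *: w).
Proof.
rewrite horner_sum; apply: eq_bigr => k _.
by rewrite !mxE !hornerE !(mulrC t).
Qed.

Lemma hform_line_neq0 g p w : hform g p != 0 -> hform_line g p w != 0.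
Proof.
by apply: contra => /eqP q0; rewrite -[p]addr0 -(scale0r w) -hform_lineE q0 horner0.
Qed.

Lemma cofinite_P1_hform g p :
  p != 0 -> hform g p != 0 -> cofinite_P1 (fun u => hform g u != 0).
Proof.
move=> p_neq0 gp_neq0; have [w D] := exists_det2_neq0 p_neq0.
have [rs rsP] := roots_finite (hform_line_neq0 w gp_neq0).
apply: (cofinite_P1_of_line (s := rs) D) => [u c _ c_neq0 gu|t].
  by rewrite hform_scale mulf_neq0 // expf_neq0.
by apply: contra => /eqP gt0; apply: rsP; rewrite /root hform_lineE gt0.
Qed.

End HomogeneousForms.

Lemma generic_P1_cofinite P : generic_P1 P -> cofinite_P1 P.
Proof.
move=> [e [g [[p [p_neq0 gp]] gP]]].
exact: cofinite_P1_impl gP (cofinite_P1_hform p_neq0 gp).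
Qed.

Section Tensors.

Variable m : nat.
Implicit Types (T : tensor m) (v : 'I_m -> 'rV[CC]_2) (j : 'I_m) (u x y : 'rV[CC]_2).

Lemma tens_eval_dfwith T v j x : tens_eval T (dfwith (i := j) v x) =
  \sum_(s : multi_index m) T s * (x 0 (s j) * \prod_(k < m | k != j) v k 0 (s k)).
Proof.
apply: eq_bigr => s _; rewrite (bigD1 j) //= dfwith_in; congr (_ * (_ * _)).
by apply: eq_bigr => k k_neq_j; rewrite dfwith_out // eq_sym.
Qed.

Lemma tens_eval_dfwithD T v j a b x y :
  tens_eval T (dfwith (i := j) v (a *: x + b *: y)) =
  a * tens_eval T (dfwith (i := j) v x) + b * tens_eval T (dfwith (i := j) v y).
Proof.
rewrite !tens_eval_dfwith !mulr_sumr -big_split; apply: eq_bigr => s _.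
by rewrite !mxE /=; ring.
Qed.

Lemma tens_eval_dfwith_id T v j : tens_eval T (dfwith (i := j) v (v j)) = tens_eval T v.
Proof.
apply: eq_bigr => s _; congr (_ * _); apply: eq_bigr => k _.
by case: dfwithP.
Qed.

Lemma tens_eval_eq0 T : (forall v, tens_eval T v = 0) -> T = 0.
Proof.
move=> T0; apply/ffunP => s; rewrite ffunE -(T0 (fun k => delta_mx 0 (s k))).
rewrite /tens_eval (bigD1 s) //= big1 ?mulr1 => [|k _]; last by rewrite mxE !eqxx.
rewrite big1 ?addr0 // => s' s'_neq_s.
have [k sk] : exists k, s' k != s k.
  apply: NNPP => all_eq; move/eqP: s'_neq_s; apply; apply/ffunP => k.
  by apply: NNPP => s'k; apply: all_eq; exists k; apply/eqP.
by rewrite (bigD1 k) //= mxE (negbTE sk) andbF mul0r mulr0.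
Qed.

Lemma inSigma0_eval j u T :
  inSigma0 j u T -> forall v, tens_eval T (dfwith (i := j) v u) = 0.
Proof. by move=> T_in v; apply: T_in; exists 1; rewrite dfwith_in scale1r. Qed.

Lemma inSigma0_det2 j u u' T :
  det2 u u' != 0 -> inSigma0 j u T -> inSigma0 j u' T -> T = 0.
Proof.
move=> D T_u T_u'; apply: tens_eval_eq0 => v.
rewrite -(tens_eval_dfwith_id T v j) (det2_decomp (v j) D) tens_eval_dfwithD.
by rewrite (inSigma0_eval T_u) (inSigma0_eval T_u') !mulr0 addr0.
Qed.

Lemma inSigma0_contract j u T v : inSigma0 j u T ->
  u 0 0 * tens_eval T (dfwith (i := j) v (vec2 1 0)) +
  u 0 1 * tens_eval T (dfwith (i := j) v (vec2 0 1)) = 0.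
Proof. by move=> T_u; rewrite -tens_eval_dfwithD -row2_decomp inSigma0_eval. Qed.

Lemma tens_eval_phi (B : 'I_m.+1 -> tensor m) (x : 'rV[CC]_m.+1) v :
  tens_eval (phi_map B x) v = \sum_(k < m.+1) x 0 k * tens_eval (B k) v.
Proof.
rewrite /tens_eval /phi_map.
under eq_bigr do rewrite sum_ffunE mulr_suml.
rewrite exchange_big /=; apply: eq_bigr => k _; rewrite mulr_sumr.
by apply: eq_bigr => s _; rewrite ffunE mulrA.
Qed.

Lemma tens_eval_phi_line (B : 'I_m.+1 -> tensor m) d (f : 'I_m.+1 -> 'I_d.+1 -> CC) p w v :
  exists q : {poly CC}, forall t, tens_eval (phi_map B (hvec f (p + t *: w))) v = q.[t].
Proof.
exists (\sum_(k < m.+1) hform_line (f k) p w * (tens_eval (B k) v)%:P) => t.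
rewrite tens_eval_phi horner_sum; apply: eq_bigr => k _.
by rewrite hornerM hornerC hform_lineE mxE.
Qed.

End Tensors.

Lemma mulmx_unit_neq0 n (A : 'M[CC]_n) (u : 'rV[CC]_n) :
  A \in unitmx -> u != 0 -> u *m A != 0.
Proof. by move=> A_unit; apply: contra => /eqP uA0; rewrite -(mulmxK A_unit u) uA0 mul0mx. Qed.

Section RegularMaps.

Variable n : nat.
Implicit Types (psi : 'rV[CC]_2 -> 'rV[CC]_n) (u : 'rV[CC]_2).

Lemma regular_P1_scale psi u c : regular_P1 psi -> u != 0 -> c != 0 ->
  same_point (psi u) (psi (c *: u)).
Proof.
move=> psi_reg u_neq0 c_neq0; have [d [f [e [g [gu fP]]]]] := psi_reg u u_neq0.
have cu_neq0 : c *: u != 0 by rewrite scaler_eq0 negb_or c_neq0.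
have gcu : hform g (c *: u) != 0 by rewrite hform_scale mulf_neq0 // expf_neq0.
have [fu_neq0 psi_u] := fP u u_neq0 gu; have [_ psi_cu] := fP _ cu_neq0 gcu.
apply: same_point_trans (same_point_sym psi_u) _; apply: same_point_trans psi_cu.
by rewrite hvec_scale; apply: same_point_scale => //; apply: expf_neq0.
Qed.

(* Both maps are given near [p] by polynomials on the line through [p]; the 2x2
   minors of these polynomial vectors vanish off a finite set, hence identically,
   in particular at [p] itself. *)
Lemma regular_P1_ext psi1 psi2 (A : 'M[CC]_2) :
  regular_P1 psi1 -> regular_P1 psi2 -> A \in unitmx ->
  cofinite_P1 (fun u => same_point (psi1 u) (psi2 (u *m A))) ->
  forall u, u != 0 -> same_point (psi1 u) (psi2 (u *m A)).
Proof.
move=> reg1 reg2 A_unit agree p p_neq0.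
have pA_neq0 := mulmx_unit_neq0 A_unit p_neq0.
have [d1 [f1 [e1 [g1 [g1p f1P]]]]] := reg1 p p_neq0.
have [d2 [f2 [e2 [g2 [g2pA f2P]]]]] := reg2 _ pA_neq0.
have [w D] := exists_det2_neq0 p_neq0.
have [s agree_s] := cofinite_P1_line agree D.
have lineA t : (p + t *: w) *m A = p *m A + t *: (w *m A) by rewrite mulmxDl -scalemxAl.
pose F k := hform_line (f1 k) p w; pose G k := hform_line (f2 k) (p *m A) (w *m A).
have minor0 a b : F a * G b - F b * G a = 0.
  have g12 := mulf_neq0 (hform_line_neq0 w g1p) (hform_line_neq0 (w *m A) g2pA).
  apply: (poly_eq0_off (s := s) g12) => t t_gen.
  rewrite hornerM mulf_eq0 negb_or !hform_lineE -lineA => /andP[g1t g2t].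
  have Lt_neq0 := line_neq0 t D.
  have [_ S1] := f1P _ Lt_neq0 g1t.
  have [_ S2] := f2P _ (mulmx_unit_neq0 A_unit Lt_neq0) g2t.
  have S := same_point_trans S1 (same_point_trans (agree_s t t_gen) (same_point_sym S2)).
  have := same_point_minor S a b.
  by rewrite !mxE lineA -!hform_lineE => eq_ab; rewrite hornerD hornerN !hornerM eq_ab subrr.
have [fp_neq0 psi1p] := f1P p p_neq0 g1p; have [fpA_neq0 psi2pA] := f2P _ pA_neq0 g2pA.
apply: same_point_trans (same_point_sym psi1p) (same_point_trans _ psi2pA).
apply: minor_same_point => // a b; apply/eqP; rewrite -subr_eq0; apply/eqP.
have := congr1 (horner^~ 0) (minor0 a b).
by rewrite hornerD hornerN !hornerM horner0 !hform_lineE !scale0r !addr0 !mxE.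
Qed.

End RegularMaps.

Lemma coprimep_vec2_neq0 (a b : {poly CC}) t : coprimep a b -> vec2 b.[t] (- a.[t]) != 0.
Proof.
move=> cop_ab; rewrite vec2_neq0 oppr_eq0 orbC.
have [at0|//] := eqVneq a.[t] 0.
by rewrite (coprimep_root cop_ab) ?orbT // /root at0.
Qed.

Lemma gcd_pencil (pa pb : {poly CC}) : (pa != 0) || (pb != 0) ->
  exists a b (r : seq CC), coprimep a b /\
    forall t (u : 'rV[CC]_2), t \notin r -> u != 0 ->
      u 0 0 * pa.[t] + u 0 1 * pb.[t] = 0 -> same_point (vec2 b.[t] (- a.[t])) u.
Proof.
move=> pab; pose g := gcdp pa pb.
have g_neq0 : g != 0 by rewrite gcdp_eq0 negb_and.
have [r rP] := roots_finite g_neq0.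
have cop := coprimep_div_gcd pab.
exists (pa %/ g), (pb %/ g), r; split => // t u t_gen u_neq0 eq_u.
have gt_neq0 : g.[t] != 0 by apply: contra t_gen => gt0; apply: rP.
have pa_t : pa.[t] = (pa %/ g).[t] * g.[t] by rewrite -hornerM divpK ?dvdp_gcdl.
have pb_t : pb.[t] = (pb %/ g).[t] * g.[t] by rewrite -hornerM divpK ?dvdp_gcdr.
apply: det2_eq0_same_point; rewrite ?coprimep_vec2_neq0 //.
apply: (mulIf gt_neq0); rewrite mul0r -eq_u pa_t pb_t /det2 !mxE /=; ring.
Qed.

Definition curve_at m (B : 'I_m.+1 -> tensor m) (j : 'I_m)
    (psi : 'rV[CC]_2 -> 'rV[CC]_m.+1) (u : 'rV[CC]_2) : Prop :=
  forall x : 'rV[CC]_m.+1, inSigma0 j u (phi_map B x) <-> exists c : CC, x = c *: psi u.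

Lemma factorization_curve_cofinite m (B : 'I_m.+1 -> tensor m) j psi :
  factorization_curve B j psi -> cofinite_P1 (curve_at B j psi).
Proof. by move=> [_ /generic_P1_cofinite]. Qed.

Section FactorizationCurves.

Variables (m : nat) (B : 'I_m.+1 -> tensor m).
Hypothesis phi_inj : forall x, phi_map B x = 0 -> x = 0.

Lemma curve_at_same_point j psi u1 u2 : u1 != 0 -> u2 != 0 ->
  curve_at B j psi u1 -> curve_at B j psi u2 ->
  same_point (psi u1) (psi u2) -> same_point u1 u2.
Proof.
move=> u1_neq0 u2_neq0 curve1 curve2 psi12; apply: NNPP => not12.
have D : det2 u1 u2 != 0 by apply/eqP => D; apply: not12; apply: det2_eq0_same_point.
have sigma1 : inSigma0 j u1 (phi_map B (psi u1)) by apply/curve1; exists 1; rewrite scale1r.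
have sigma2 : inSigma0 j u2 (phi_map B (psi u1)).
  have [_ [c [c_neq0 def_psi2]]] := psi12.
  by apply/curve2; exists c^-1; rewrite def_psi2 scalerA mulVf ?scale1r.
have [psi1_neq0 _] := psi12.
by move/eqP: psi1_neq0; apply; apply/phi_inj/(inSigma0_det2 D sigma1 sigma2).
Qed.

Lemma phi_line_contractions j d (f : 'I_m.+1 -> 'I_d.+1 -> CC) p w t0 :
  hvec f (p + t0 *: w) != 0 ->
  exists v (pa pb : {poly CC}), (pa != 0) || (pb != 0) /\ forall t,
    tens_eval (phi_map B (hvec f (p + t *: w))) (dfwith (i := j) v (vec2 1 0)) = pa.[t] /\
    tens_eval (phi_map B (hvec f (p + t *: w))) (dfwith (i := j) v (vec2 0 1)) = pb.[t].
Proof.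
move=> ft0_neq0.
have [v v_t0] : exists v, tens_eval (phi_map B (hvec f (p + t0 *: w))) v != 0.
  apply: NNPP => all0; move/eqP: ft0_neq0; apply; apply/phi_inj/tens_eval_eq0 => v.
  by apply/eqP; apply: NNPP => v0; apply: all0; exists v; apply/negP.
have [pa paE] := tens_eval_phi_line B f p w (dfwith (i := j) v (vec2 1 0)).
have [pb pbE] := tens_eval_phi_line B f p w (dfwith (i := j) v (vec2 0 1)).
exists v, pa, pb; split => [|t]; last by rewrite paE pbE.
apply: contraT => /norP[/negPn/eqP pa0 /negPn/eqP pb0]; move: v_t0.
rewrite -(tens_eval_dfwith_id _ v j) [v j]row2_decomp tens_eval_dfwithD.
by rewrite paE pbE pa0 pb0 !horner0 !mulr0 addr0 eqxx.
Qed.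

Variables (i j : 'I_m) (psi_i psi_j : 'rV[CC]_2 -> 'rV[CC]_m.+1).
Hypotheses (reg_i : regular_P1 psi_i) (reg_j : regular_P1 psi_j).
Hypotheses (gen_i : cofinite_P1 (curve_at B i psi_i)) (gen_j : cofinite_P1 (curve_at B j psi_j)).
Hypothesis psi_ij : forall u, u != 0 -> exists u', u' != 0 /\ same_point (psi_i u) (psi_j u').

Lemma cofinite_P1_curve_at_image :
  cofinite_P1 (fun u => forall u', u' != 0 -> same_point (psi_i u) (psi_j u') ->
                                   curve_at B j psi_j u').
Proof.
have [zs zsP] := gen_j.
have : cofinite_P1 (fun u => forall z, z \in zs -> ~ same_point (psi_i u) (psi_j z)).
  apply: cofinite_P1_all => z _.
  by apply: (cofinite_P1_not_same_point (f := psi_i) _ gen_i); apply: curve_at_same_point.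
apply: cofinite_P1_impl => u u_neq0 avoid_zs u' u'_neq0 psi_uu'.
apply: zsP => // z z_in [z_neq0 [c [c_neq0 def_u']]]; apply: (avoid_zs z z_in).
by apply: same_point_trans psi_uu' _; rewrite def_u'; apply/same_point_sym/regular_P1_scale.
Qed.

Lemma curve_meets_pencil : exists a b (s : seq CC), coprimep a b /\
  forall t, t \notin s -> curve_at B i psi_i (vec2 1 t) /\
    same_point (psi_i (vec2 1 t)) (psi_j (vec2 b.[t] (- a.[t]))).
Proof.
have D : det2 (vec2 1 0) (vec2 0 1) != 0 by rewrite det2_std_basis oner_eq0.
have e0_neq0 := vec2_line1_neq0 0.
have [d [f [e [g [g_e0 fP]]]]] := reg_i e0_neq0.
have [s0 s0P] := cofinite_P1_line (cofinite_P1_and gen_i (cofinite_P1_and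
  cofinite_P1_curve_at_image (cofinite_P1_hform e0_neq0 g_e0))) D.
have [ts ts_gen] := seq_avoid s0; have [_ [_ g_ts]] := s0P ts ts_gen.
have [v [pa [pb [pab pabE]]]] := phi_line_contractions j (fP _ (line_neq0 ts D) g_ts).1.
have [a [b [r [cop_ab abP]]]] := gcd_pencil pab.
exists a, b, (s0 ++ r); split => // t; rewrite mem_cat negb_or -vec2_line => /andP[t_s0 t_r].
have [curve_t [image_t g_t]] := s0P t t_s0; split => //.
have L_neq0 := line_neq0 t D.
have [u' [u'_neq0 psi_tu']] := psi_ij L_neq0.
have [_ f_t] := fP _ L_neq0 g_t.
have [_ [c [c_neq0 def_psi]]] := same_point_trans f_t psi_tu'.
have sigma : inSigma0 j u' (phi_map B (hvec f (vec2 1 0 + t *: vec2 0 1))).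
  by apply/(image_t u' u'_neq0 psi_tu'); exists c^-1; rewrite def_psi scalerA mulVf ?scale1r.
have [paE pbE] := pabE t.
have := inSigma0_contract v sigma; rewrite paE pbE => /(abP t u' t_r u'_neq0).
move=> [_ [c' [c'_neq0 def_u']]]; apply: same_point_trans psi_tu' _; rewrite def_u'.
by apply/same_point_sym/regular_P1_scale => //; apply: coprimep_vec2_neq0.
Qed.

Lemma curve_pencil_injective a b (s : seq CC) : coprimep a b ->
  (forall t, t \notin s -> curve_at B i psi_i (vec2 1 t) /\
     same_point (psi_i (vec2 1 t)) (psi_j (vec2 b.[t] (- a.[t])))) ->
  forall t1 t2, t1 \notin s -> t2 \notin s -> a.[t1] * b.[t2] = a.[t2] * b.[t1] -> t1 = t2.
Proof.
move=> cop_ab abP t1 t2 t1_gen t2_gen eq12.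
have [curve1 psi1] := abP t1 t1_gen; have [curve2 psi2] := abP t2 t2_gen.
have pencil12 : same_point (vec2 b.[t1] (- a.[t1])) (vec2 b.[t2] (- a.[t2])).
  apply: det2_eq0_same_point; rewrite ?coprimep_vec2_neq0 // det2_vec2.
  by transitivity (a.[t1] * b.[t2] - a.[t2] * b.[t1]); [ring | rewrite eq12 subrr].
have [nz [c [c_neq0 def2]]] := pencil12.
have psi_j12 := regular_P1_scale reg_j nz c_neq0; rewrite -def2 in psi_j12.
have := curve_at_same_point (vec2_line1_neq0 t1) (vec2_line1_neq0 t2) curve1 curve2
  (same_point_trans psi1 (same_point_trans psi_j12 (same_point_sym psi2))).
by move/same_point_minor/(_ 0 1); rewrite !mxE /= mul1r mulr1.
Qed.

Lemma curve_reparametrization :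
  exists A : 'M[CC]_2, A \in unitmx /\
    forall u, u != 0 -> same_point (psi_i u) (psi_j (u *m A)).
Proof.
have [a [b [s [cop_ab abP]]]] := curve_meets_pencil.
have pencil_inj := curve_pencil_injective cop_ab abP.
have A_unit := pencil_mx_unit cop_ab pencil_inj.
exists (pencil_mx a b); split => //; apply: regular_P1_ext => //.
have D : det2 (vec2 1 0) (vec2 0 1) != 0 by rewrite det2_std_basis oner_eq0.
apply: (cofinite_P1_of_line (s := s) D) => [u c u_neq0 c_neq0 psi_u | t t_gen].
  rewrite -scalemxAl.
  apply: same_point_trans (same_point_sym (regular_P1_scale reg_i u_neq0 c_neq0)) _.
  exact: same_point_trans psi_u (regular_P1_scale reg_j (mulmx_unit_neq0 A_unit u_neq0) c_neq0).
by rewrite vec2_line (vec2_mul_pencil_mx cop_ab pencil_inj); apply: (abP t t_gen).2.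
Qed.

End FactorizationCurves.

Theorem lemma2p12 (m : nat) (B : 'I_m.+1 -> tensor m) (i j : 'I_m)
    (psi_i psi_j : 'rV[CC]_2 -> 'rV[CC]_m.+1) :
  factorization_structure B ->
  factorization_curve B i psi_i ->
  factorization_curve B j psi_j ->
  (same_image psi_i psi_j <->
   exists A : 'M[CC]_2, A \in unitmx /\
     forall u : 'rV[CC]_2, u != 0 -> same_point (psi_i u) (psi_j (u *m A))).
Proof.
move=> [phi_inj _] curve_i curve_j; split=> [[psi_ij _] | [A [A_unit psi_A]]].
  exact: (curve_reparametrization phi_inj (proj1 curve_i) (proj1 curve_j)
    (factorization_curve_cofinite curve_i) (factorization_curve_cofinite curve_j) psi_ij).
have Ainv_unit : invmx A \in unitmx by rewrite unitmx_inv.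
split=> u u_neq0; first by exists (u *m A); split; [apply: mulmx_unit_neq0 | apply: psi_A].
exists (u *m invmx A); split; first exact: mulmx_unit_neq0.
by rewrite -[X in psi_j X](mulmxKV A_unit u); apply/psi_A/mulmx_unit_neq0.
Qed.
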